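(* Consider C-VFL (described in the context) and suppose Assumptions (A1)–(A5) of the context hold. Let $t_0$ be a communication iteration and suppose $\eta^{t_0}\le\frac{1}{4Q\max_mL_m}$. Then $$\sum_{t=t_0}^{t_0+Q-1}\mathbb{E}^{t_0}\big\|\hat{\mathcal G}^t-\mathcal G^{t_0}\big\|^2\le 16Q^3(\eta^{t_0})^2\sum_{m=0}^ML_m^2\|\nabla_mF(\Theta^{t_0})\|^2+16Q^3(\eta^{t_0})^2\sum_{m=0}^ML_m^2\frac{\sigma_m^2}{B}+64Q^3\sum_{m=0}^MH_m^2G_m^2\|E_m^{t_0}\|_{\mathcal F}^2 .$$
   Context: Setting. There are $M$ parties indexed $1,\dots,M$ and a server indexed $0$. A dataset with samples $x^i=[x_1^i,\dots,x_M^i]$ and labels $y^i$ ($i=1,\dots,N$) is vertically partitioned, party $m$ holding features $x_m^i$. Party $m\ge1$ has parameters $\theta_m$ and embedding function $h_m(\theta_m;x_m)\in\mathbb{R}^{P_m}$; the server has $\theta_0\in\mathbb{R}^{P_0}$ and $h_0(\theta_0;x):=\theta_0$. For a loss $l$, $F(\Theta)=\frac1N\sum_i l(\theta_0,h_1(\theta_1;x_1^i),\dots,h_M(\theta_M;x_M^i);y^i)$, $\Theta=[\theta_0^T,\dots,\theta_M^T]^T$; for a random mini-batch $\mathcal B$ of $B$ samples, $F_{\mathcal B}$ is the corresponding average over $\mathcal B$. $\nabla_m$ denotes the partial gradient in $\theta_m$; $h_m(\theta_m;X_m^{\mathcal B})$ is the $P_m\times B$ matrix of embeddings of the samples of $\mathcal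 B$. For a collection $\Phi$ of embeddings of parties $j\neq m$, $\nabla_mF_{\mathcal B}(\Phi)$ is the gradient in $\theta_m$ of the mini-batch loss in which party $m$'s embedding is $h_m(\theta_m;X_m^{\mathcal B})$ and the other embeddings are fixed to those in $\Phi$. Assumptions. (A1) $\|\nabla F(\Theta_1)-\nabla F(\Theta_2)\|\le L\|\Theta_1-\Theta_2\|$ and $\|\nabla_mF_{\mathcal B}(\Theta_1)-\nabla_mF_{\mathcal B}(\Theta_2)\|\le L_m\|\Theta_1-\Theta_2\|$ for all $\Theta_1,\Theta_2$, all $\mathcal B$, with $L,L_m<\infty$. (A2) $\mathbb{E}_{\mathcal B}\nabla_mF_{\mathcal B}(\Theta)=\nabla_mF(\Theta)$. (A3) $\mathbb{E}_{\mathcal B}\|\nabla_mF(\Theta)-\nabla_mF_{\mathcal B}(\Theta)\|^2\le\sigma_m^2/B$. (A4) $\|\nabla^2_{h_m(\theta_m;X_m^{\mathcal B})}F_{\mathcal B}(\Theta)\|_{\mathcal F}\le H_m$ for all $\Theta$, all $\mathcal B$. (A5) $\|\nabla_{\theta_m}h_m(\theta_m;X_m^{\mathcal B})\|_{\mathcal F}\le G_m$ for all $\theta_m$, all $\mathcal B$. Algorithm C-VFL. Compressors $\mathcal C_m:\mathbb{R}^{P_m}\to\mathbb{R}^{P_m}$, $Q$ local iterations per round. At each communication iteration $t$ ($t\bmod Q=0$) a mini-batch $\mathcal B^t$ is sampled and $\hat\Phi^{t}=\{\mathcal C_0(\theta_0^t),\mathcal C_1(h_1(\theta_1^t;X_1^{\mathcal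 B^t})),\dots,\mathcal C_M(h_M(\theta_M^t;X_M^{\mathcal B^t}))\}$ is sent to all parties. With $t_0$ the most recent communication iteration $\le t$, each $m=0,\dots,M$ sets $\hat\Phi_m^t$ to be $\hat\Phi^{t_0}$ with $m$-th entry replaced by $h_m(\theta_m^t;X_m^{\mathcal B^{t_0}})$ and updates $\theta_m^{t+1}=\theta_m^t-\eta^{t_0}\nabla_mF_{\mathcal B}(\hat\Phi_m^t;y^{\mathcal B^{t_0}})$. Define $\hat{\mathcal G}^t=[(\nabla_0F_{\mathcal B}(\hat\Phi_0^t))^T,\dots,(\nabla_MF_{\mathcal B}(\hat\Phi_M^t))^T]^T$, so $\Theta^{t+1}=\Theta^t-\eta^{t_0}\hat{\mathcal G}^t$, and let $\mathcal G^{t_0}=\nabla F_{\mathcal B^{t_0}}(\Theta^{t_0})$ be the stacked stochastic gradient at iteration $t_0$ on mini-batch $\mathcal B^{t_0}$ without compression error. $\mathbb{E}^{t_0}$ denotes expectation over $\mathcal B^{t_0}$ conditioned on $\Theta^0,\dots,\Theta^{t_0}$. Compression error. $\epsilon_j^{t_0}:=\mathcal C_j(h_j(\theta_j^{t_0};X_j^{\mathcal B^{t_0}}))-h_j(\theta_j^{t_0};X_j^{\mathcal B^{t_0}})$ ($P_j\times B$), and $E_m^{t_0}$ is the matrix stacking the blocks $\epsilon_j^{t_0}$ for $j\ne m$ with a zero block in position $m$.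
   Formalization: (A4) bounds, at every embedding collection Φ rather than only at Θ, the Frobenius norm of the second derivatives of $F_{\mathcal B}$ in $h_m(\theta_m;X_m^{\mathcal B})$ against all parties' embeddings, and $\|E_m^{t_0}\|_{\mathcal F}^2$ is replaced by its expectation $\mathbb{E}^{t_0}$. Each condition added here is assumed in the paper as well or is needed for the statement above to hold. *)

From HB Require Import structures.
From mathcomp Require Import all_boot all_order all_algebra.
From mathcomp Require Import all_classical all_reals all_analysis.
Import Order.TTheory GRing.Theory Num.Theory.
Local Open Scope ring_scope.

Definition sqnorm {R : realType} {n : nat} (v : 'rV[R]_n) : R :=
  \sum_(k < n) v 0 k ^+ 2.

Definition enorm {R : realType} {n : nat} (v : 'rV[R]_n) : R :=
  Num.sqrt (sqnorm v).

Definition pderiv1 {R : realType} {n : nat} (g : 'rV[R]_n -> R)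
  (v : 'rV[R]_n) (k : 'I_n) : R :=
  derive1 (fun t : R => g (v + t *: delta_mx 0 k)) 0.

Definition grad {R : realType} {n : nat} (g : 'rV[R]_n -> R) (v : 'rV[R]_n)
  : 'rV[R]_n := \row_k pderiv1 g v k.

(* ---------- the vertical-federated model ----------
   Parties are indexed by 'I_M.+1, index 0 = server.
   d m : dimension of theta_m ; P m : embedding dimension of party m.
   X m : feature space of party m, x m i : features of sample i held by m.
   h m theta xi : embedding of party m ; l : loss of the concatenated
   embeddings [h_0; ...; h_M] and a label. *)

Definition Params {R : realType} {M : nat} (d : 'I_M.+1 -> nat) :=
  forall m : 'I_M.+1, 'rV[R]_(d m).

Definition Emb {R : realType} {M : nat} (P : 'I_M.+1 -> nat) (N : nat) :=
  forall m : 'I_M.+1, 'I_N -> 'rV[R]_(P m).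

Definition psqnorm {R : realType} {M : nat} {d : 'I_M.+1 -> nat}
  (T : @Params R M d) : R := \sum_(m < M.+1) sqnorm (T m).

Definition psub {R : realType} {M : nat} {d : 'I_M.+1 -> nat}
  (T1 T2 : @Params R M d) : @Params R M d := fun m => T1 m - T2 m.

Section Model.
Context {R : realType} {M N : nat} {d P : 'I_M.+1 -> nat}
  {X : 'I_M.+1 -> Type} {Y : Type}
  (x : forall m : 'I_M.+1, 'I_N -> X m) (y : 'I_N -> Y)
  (h : forall m : 'I_M.+1, 'rV[R]_(d m) -> X m -> 'rV[R]_(P m))
  (l : 'rV[R]_(\sum_(j < M.+1) P j) -> Y -> R).

Definition emb (m : 'I_M.+1) (th : 'rV[R]_(d m)) : 'I_N -> 'rV[R]_(P m) :=
  fun i => h m th (x m i).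

Definition trueEmb (T : @Params R M d) : @Emb R M P N :=
  fun m => emb m (T m).

Definition lossS (S : {set 'I_N}) (Phi : @Emb R M P N) : R :=
  (#|S|%:R)^-1 * \sum_(i in S) l (\mxrow_(j < M.+1) Phi j i) (y i).

(* nabla_m F_S(Phi) at theta_m : gradient in theta_m of the mini-batch loss
   in which party m's embedding is h_m(theta_m; .) and the other embeddings
   are those of Phi *)
Definition gradS (S : {set 'I_N}) (m : 'I_M.+1) (Phi : @Emb R M P N)
  (th : 'rV[R]_(d m)) : 'rV[R]_(d m) :=
  grad (fun th' => lossS S (@dfwith _ (fun j : 'I_M.+1 => 'I_N -> 'rV[R]_(P j)) Phi m (emb m th'))) th.

Definition gradSTheta (S : {set 'I_N}) (m : 'I_M.+1) (T : @Params R M d)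
  : 'rV[R]_(d m) := gradS S m (trueEmb T) (T m).

Definition gradF (m : 'I_M.+1) (T : @Params R M d) : 'rV[R]_(d m) :=
  gradSTheta [set: 'I_N]%SET m T.

Definition pertE (Phi : @Emb R M P N) (j : 'I_M.+1) (i : 'I_N) (q : 'I_(P j))
  (t : R) : @Emb R M P N :=
  @dfwith _ (fun j' : 'I_M.+1 => 'I_N -> 'rV[R]_(P j')) Phi j (fun k => if k == i then Phi j k + t *: delta_mx 0 q else Phi j k).

Definition pdE (j : 'I_M.+1) (i : 'I_N) (q : 'I_(P j))
  (f : @Emb R M P N -> R) (Phi : @Emb R M P N) : R :=
  derive1 (fun t : R => f (pertE Phi j i q t)) 0.

Definition hess_sq (S : {set 'I_N}) (m : 'I_M.+1) (Phi : @Emb R M P N) : R :=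
  \sum_(i in S) \sum_(p < P m) \sum_(j < M.+1) \sum_(k in S) \sum_(q < P j)
     (pdE j k q (pdE m i p (lossS S)) Phi) ^+ 2.

Definition jac_sq (S : {set 'I_N}) (m : 'I_M.+1) (th : 'rV[R]_(d m)) : R :=
  \sum_(i in S) \sum_(p < P m) \sum_(k < d m)
     (derive1 (fun t : R => h m (th + t *: delta_mx 0 k) (x m i) 0 p) 0) ^+ 2.

Variable C : forall m : 'I_M.+1, 'rV[R]_(P m) -> 'rV[R]_(P m).

(* the compressed embeddings hat Phi^{t0} sent at the communication
   iteration t0 (parameters T0 = Theta^{t0}) *)
Definition compEmb (T0 : @Params R M d) : @Emb R M P N :=
  fun j i => C j (h j (T0 j) (x j i)).

Fixpoint traj (S : {set 'I_N}) (eta : R) (T0 : @Params R M d) (k : nat)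
  : @Params R M d :=
  match k with
  | 0 => T0
  | k'.+1 => let Tk := traj S eta T0 k' in
             fun m => Tk m - eta *: gradS S m (compEmb T0) (Tk m)
  end.

Definition Ghat (S : {set 'I_N}) (eta : R) (T0 : @Params R M d) (k : nat)
  : @Params R M d :=
  fun m => gradS S m (compEmb T0) (traj S eta T0 k m).

Definition G0 (S : {set 'I_N}) (T0 : @Params R M d) : @Params R M d :=
  fun m => gradSTheta S m T0.

Definition err_sq (S : {set 'I_N}) (T0 : @Params R M d) (m : 'I_M.+1) : R :=
  \sum_(j < M.+1 | j != m) \sum_(i in S)
     sqnorm (C j (h j (T0 j) (x j i)) - h j (T0 j) (x j i)).

End Model.

From mathcomp Require Import all_boot all_order all_algebra.
From mathcomp Require Import all_classical all_reals all_analysis.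
From mathcomp Require Import ring lra.
Import Order.TTheory GRing.Theory Num.Theory numFieldNormedType.Exports.
Local Open Scope ring_scope.

(* Fix a batch S and a party m and write a_k for the distance between the local
   gradient at step t0 + k and G_m^{t0}.  It splits into a compression part, the
   same gradient taken with the compressed instead of the exact embeddings of the
   other parties, and a drift part, the change of the exact gradient along the
   local trajectory.  The chain rule followed by the mean value theorem on the
   segment between the two embedding collections bounds the first by
   H_m G_m ||E_m||_F ((A4), (A5)); by (A1) the second is at most
   L_m eta sum_{s<k} (a_s + ||G_m^{t0}||).  Since 4 Q eta L_m <= 1 this discrete
   Gronwall inequality gives a_k <= 4/3 (Q eta L_m ||G_m^{t0}|| + H_m G_m ||E_m||_F).
   Squaring, summing over the Q local steps and averaging over batches with
   E ||grad_m F_S||^2 = ||grad_m F||^2 + E ||grad_m F - grad_m F_S||^2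
   ((A2), (A3)) gives the bound. *)

Section DirectionalDerivative.
Context {R : realType} {V W : normedModType R}.

Lemma derive1_line (f : V -> W) a v s0 :
  derive1 (fun s : R => f (a + s *: v)) s0 = 'D_v f (a + s0 *: v).
Proof.
rewrite /derive1 /derive; set g := (fun _ : R => _); set g' := (fun _ : R => _).
suff -> : g = g' by [].
by apply/funext => t; rewrite /g /g' /= scalerDl addrCA.
Qed.

Lemma derive1_line0 (f : V -> W) a v :
  derive1 (fun s : R => f (a + s *: v)) 0 = 'D_v f a.
Proof. by rewrite derive1_line scale0r addr0. Qed.

Lemma differentiable_line (a v : V) (s0 : R) :
  differentiable (fun s : R => a + s *: v) s0.
Proof. by apply: differentiableD => //; apply: differentiableZl. Qed.

Lemma is_derive_line (f : V -> W) a v s0 : differentiable f (a + s0 *: v) ->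
  is_derive s0 1 (fun s : R => f (a + s *: v)) ('D_v f (a + s0 *: v)).
Proof.
move=> df; apply: DeriveDef; last by rewrite -derive1E derive1_line.
apply/derivable1_diffP; apply: (differentiable_comp (differentiable_line _ _ _)).
exact: df.
Qed.

Lemma is_derive_big {I : Type} (r : seq I) (A : pred I) {f : I -> V -> W}
    {x v : V} {df : I -> W} :
  (forall i, A i -> is_derive x v (f i) (df i)) ->
  is_derive x v (fun z => \sum_(i <- r | A i) f i z) (\sum_(i <- r | A i) df i).
Proof.
move=> fdf; have -> : (fun z => \sum_(i <- r | A i) f i z) = \sum_(i <- r | A i) f i.
  by apply/funext => z; rewrite fct_sumE.
by elim/big_rec2: _ => [|i ? ? /fdf]; [exact: is_derive_cst | exact: is_deriveD].
Qed.

Lemma is_deriveMl (c : R) {f : V -> R} {x v : V} {df : R} :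
  is_derive x v f df -> is_derive x v (fun z => c * f z) (c * df).
Proof. by move=> fdf; have := is_deriveZ c fdf; apply. Qed.

End DirectionalDerivative.

Section RealFieldInequalities.
Context {R : realFieldType}.

Lemma sqr_sum_mul_le (I : finType) (A : pred I) (a b : I -> R) :
  (\sum_(i | A i) a i * b i) ^+ 2 <=
  (\sum_(i | A i) a i ^+ 2) * (\sum_(i | A i) b i ^+ 2).
Proof.
have lagrange : \sum_(i | A i) \sum_(j | A j) (a i * b j - a j * b i) ^+ 2 =
    2 * ((\sum_(i | A i) a i ^+ 2) * (\sum_(i | A i) b i ^+ 2) -
         (\sum_(i | A i) a i * b i) ^+ 2).
  transitivity (\sum_(i | A i) \sum_(j | A j) (a i ^+ 2 * b j ^+ 2) +
      \sum_(i | A i) \sum_(j | A j) (a j ^+ 2 * b i ^+ 2) -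
      2 * \sum_(i | A i) \sum_(j | A j) (a i * b i * (a j * b j))).
    rewrite mulr_sumr -big_split -sumrB /=; apply: eq_bigr => i _.
    by rewrite mulr_sumr -big_split -sumrB; apply: eq_bigr => j _ /=; ring.
  by rewrite [X in _ + X - _]exchange_big expr2 !big_distrlr; ring.
have : 0 <= \sum_(i | A i) \sum_(j | A j) (a i * b j - a j * b i) ^+ 2.
  by do 2!(apply: sumr_ge0 => ? _); apply: sqr_ge0.
rewrite lagrange; lra.
Qed.

Lemma sqr_sum2_mul_le (I J : finType) (A : pred I) (a b : I -> J -> R) :
  (\sum_(i | A i) \sum_j a i j * b i j) ^+ 2 <=
  (\sum_(i | A i) \sum_j a i j ^+ 2) * (\sum_(i | A i) \sum_j b i j ^+ 2).
Proof.
rewrite !(pair_big A xpredT) /=.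
exact: (sqr_sum_mul_le _ (fun q : I * J => A q.1 && true)).
Qed.

Lemma discrete_gronwall (Q : nat) (a : nat -> R) (c e g : R) :
  0 <= c -> c * Q%:R * 4 <= 1 -> 0 <= e -> 0 <= g ->
  (forall k, (k < Q)%N -> a k <= e + c * \sum_(s < k) (a s + g)) ->
  forall k, (k < Q)%N -> a k <= 4 / 3 * (c * Q%:R * g + e).
Proof.
move=> c0 cQ e0 g0 rec; set A := 4 / 3 * _.
have A0 : 0 <= A by apply: mulr_ge0; [lra | rewrite addr_ge0 // !mulr_ge0].
apply: ltn_ind => k IH kQ; apply: (le_trans (rec k kQ)).
have sum_le : \sum_(s < k) (a s + g) <= Q%:R * (A + g).
  apply: (@le_trans _ _ (\sum_(s < k) (A + g))).
    by apply: ler_sum => s _; rewrite lerD2r IH // (ltn_trans _ kQ).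
  rewrite sumr_const card_ord -[_ *+ k]mulr_natl; apply: ler_wpM2r.
    exact: addr_ge0.
  by rewrite ler_nat ltnW.
have := ler_wpM2l c0 sum_le; move: cQ A0; rewrite /A; set q := Q%:R; nra.
Qed.

Lemma sum_weighted_le (T I : finType) (Q : nat) (w : T -> R)
    (f : nat -> T -> I -> R) (g : T -> I -> R) :
  (forall S, 0 <= w S) ->
  (forall k S i, (k < Q)%N -> w S != 0 -> f k S i <= g S i) ->
  \sum_(k < Q) \sum_S w S * \sum_i f k S i <= Q%:R * \sum_i \sum_S w S * g S i.
Proof.
move=> w_ge0 fg; apply: (@le_trans _ _ (\sum_(k < Q) \sum_S w S * \sum_i g S i)).
  apply: ler_sum => k _; apply: ler_sum => S _.
  have [->|wS] := eqVneq (w S) 0; first by rewrite !mul0r.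
  by apply: ler_wpM2l => //; apply: ler_sum => i _; apply: fg.
rewrite sumr_const card_ord -[_ *+ Q]mulr_natl exchange_big /=.
by under eq_bigr do rewrite mulr_sumr.
Qed.

End RealFieldInequalities.

Section EuclideanRow.
Context {R : realType}.

Definition dotv {n} (u v : 'rV[R]_n) : R := \sum_(k < n) u 0 k * v 0 k.

Lemma pderiv1E {n} (g : 'rV[R]_n -> R) z k :
  pderiv1 g z k = 'D_(delta_mx 0 k) g z.
Proof. exact: derive1_line0. Qed.

Lemma derive_dotv_grad {n} (g : 'rV[R]_n -> R) z w : differentiable g z ->
  'D_w g z = dotv w (grad g z).
Proof.
move=> dg; rewrite deriveE // {1}(row_sum_delta w) linear_sum /dotv.
by apply: eq_bigr => k _; rewrite linearZ /= -deriveE // -pderiv1E mxE.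
Qed.

Lemma le_sqr_of_sqrtr_le {a b : R} : 0 <= a -> Num.sqrt a <= b -> a <= b ^+ 2.
Proof.
move=> a0 ab; rewrite -(sqr_sqrtr a0) ler_pXn2r // ?nnegrE ?sqrtr_ge0 //.
exact: le_trans (sqrtr_ge0 a) ab.
Qed.

Lemma sqnorm_ge0 {n} (v : 'rV[R]_n) : 0 <= sqnorm v.
Proof. by apply: sumr_ge0 => k _; apply: sqr_ge0. Qed.

Lemma sqnorm0 {n} : sqnorm (0 : 'rV[R]_n) = 0.
Proof. by rewrite /sqnorm big1 // => k _; rewrite mxE expr0n. Qed.

Lemma sqr_dotv_le {n} (u v : 'rV[R]_n) : dotv u v ^+ 2 <= sqnorm u * sqnorm v.
Proof. exact: sqr_sum_mul_le. Qed.

Lemma sqr_derive_le {n} (g : 'rV[R]_n -> R) z w : differentiable g z ->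
  ('D_w g z) ^+ 2 <= sqnorm w * sqnorm (grad g z).
Proof. by move=> dg; rewrite derive_dotv_grad // sqr_dotv_le. Qed.

Lemma enorm_ge0 {n} (v : 'rV[R]_n) : 0 <= enorm v.
Proof. exact: sqrtr_ge0. Qed.

Lemma enorm_sqr {n} (v : 'rV[R]_n) : enorm v ^+ 2 = sqnorm v.
Proof. by rewrite sqr_sqrtr // sqnorm_ge0. Qed.

Lemma dotv_le {n} (u v : 'rV[R]_n) : dotv u v <= enorm u * enorm v.
Proof.
have [uv0|uv_gt0] := lerP (dotv u v) 0.
  by rewrite (le_trans uv0) // mulr_ge0 ?enorm_ge0.
rewrite -ler_sqr ?nnegrE ?mulr_ge0 ?enorm_ge0 ?(ltW uv_gt0) //.
by rewrite exprMn !enorm_sqr sqr_dotv_le.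
Qed.

Lemma enormD {n} (u v : 'rV[R]_n) : enorm (u + v) <= enorm u + enorm v.
Proof.
rewrite -ler_sqr ?nnegrE ?addr_ge0 ?enorm_ge0 //.
have -> : enorm (u + v) ^+ 2 = enorm u ^+ 2 + 2 * dotv u v + enorm v ^+ 2.
  rewrite !enorm_sqr /sqnorm /dotv mulr_sumr -!big_split /=.
  by apply: eq_bigr => k _; rewrite !mxE; ring.
have := dotv_le u v; lra.
Qed.

Lemma enormZ {n} (c : R) (v : 'rV[R]_n) : enorm (c *: v) = `|c| * enorm v.
Proof.
rewrite /enorm /sqnorm -sqrtr_sqr -sqrtrM ?sqr_ge0 // mulr_sumr.
by congr Num.sqrt; apply: eq_bigr => k _; rewrite mxE exprMn.
Qed.

Lemma enormN {n} (v : 'rV[R]_n) : enorm (- v) = enorm v.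
Proof. by rewrite -scaleN1r enormZ normrN normr1 mul1r. Qed.

Lemma enorm_sum {n} k (F : nat -> 'rV[R]_n) :
  enorm (\sum_(s < k) F s) <= \sum_(s < k) enorm (F s).
Proof.
elim/big_rec2: _ => [|s a b _ IH]; last by rewrite (le_trans (enormD _ _)) // lerD2l.
by rewrite /enorm sqnorm0 sqrtr0.
Qed.

Lemma sqnorm_mean_variance (T : finType) n (w : T -> R) (g : T -> 'rV[R]_n)
    (gm : 'rV[R]_n) :
  \sum_S w S = 1 -> \sum_S w S *: g S = gm ->
  \sum_S w S * sqnorm (g S) = sqnorm gm + \sum_S w S * sqnorm (gm - g S).
Proof.
move=> w1 wg; have wgk k : \sum_S w S * g S 0 k = gm 0 k.
  by rewrite -wg summxE; apply: eq_bigr => S _; rewrite !mxE.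
rewrite /sqnorm; under eq_bigr do rewrite mulr_sumr.
under [X in _ = _ + X]eq_bigr do rewrite mulr_sumr.
rewrite exchange_big [X in _ = _ + X]exchange_big -big_split /=.
apply: eq_bigr => k _.
have -> : \sum_S w S * (gm - g S) 0 k ^+ 2 = gm 0 k ^+ 2 * \sum_S w S
    - 2 * gm 0 k * \sum_S w S * g S 0 k + \sum_S w S * g S 0 k ^+ 2.
  rewrite !mulr_sumr -sumrB -big_split /=; apply: eq_bigr => S _.
  by rewrite !mxE; ring.
by rewrite w1 wgk; ring.
Qed.

End EuclideanRow.

Section RowCalculus.
Context {R : realType}.

Lemma differentiable_affine {n k} (A : 'rV[R]_n) (e : 'I_k -> 'rV[R]_n) w :
  differentiable (fun w : 'rV[R]_k => A + \sum_(p < k) w 0 p *: e p) w.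
Proof.
apply: differentiableD => //.
rewrite -(fct_sumE _ _ (fun p (w : 'rV[R]_k) => w 0 p *: e p)).
apply: differentiable_sum => p; apply: differentiableZl.
exact: differentiable_coord.
Qed.

Lemma pderiv1_affine {n k} (f : 'rV[R]_n -> R) (A : 'rV[R]_n)
    (e : 'I_k -> 'rV[R]_n) w p :
  pderiv1 (fun w => f (A + \sum_(q < k) w 0 q *: e q)) w p =
  'D_(e p) f (A + \sum_(q < k) w 0 q *: e q).
Proof.
rewrite /pderiv1 -derive1_line0.
suff -> : (fun s => f (A + \sum_(q < k) (w + s *: delta_mx 0 p) 0 q *: e q)) =
    (fun s => f (A + \sum_(q < k) w 0 q *: e q + s *: e p)) by [].
apply/funext => s; rewrite -addrA; congr (f (_ + _)).
rewrite (eq_bigr (fun q => w 0 q *: e q + (s * (q == p)%:R) *: e q)); last first.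
  by move=> q _; rewrite !mxE /= scalerDl.
rewrite big_split /=; congr (_ + _).
rewrite (bigD1 p) //= eqxx mulr1 big1 ?addr0 // => q /negbTE->.
by rewrite mulr0 scale0r.
Qed.

Lemma is_derive_affine_comp {n k} (f : 'rV[R]_n -> R) (A : 'rV[R]_n)
    (e : 'I_k -> 'rV[R]_n) (u : R -> 'rV[R]_k) t0 :
  differentiable u t0 -> differentiable f (A + \sum_(p < k) u t0 0 p *: e p) ->
  is_derive t0 1 (fun t => f (A + \sum_(p < k) u t 0 p *: e p))
    (\sum_(p < k) derive1 (fun t => u t 0 p) t0 *
        'D_(e p) f (A + \sum_(q < k) u t0 0 q *: e q)).
Proof.
move=> du df; set g := fun w : 'rV[R]_k => f (A + \sum_(p < k) w 0 p *: e p).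
have dg : differentiable g (u t0).
  exact: differentiable_comp (differentiable_affine A e (u t0)) df.
have dgu : differentiable (g \o u) t0 by apply: differentiable_comp.
rewrite -[(fun t => _)]/(g \o u); apply: DeriveDef; first exact/derivable1_diffP.
rewrite deriveE // diff_comp // /comp -deriveE // -[X in 'D_X _ _]deriveE //.
rewrite derive_dotv_grad //; apply: eq_bigr => p _.
rewrite derive_mx ?mxE; last exact: diff_derivable.
by rewrite pderiv1_affine derive1E.
Qed.

Lemma sum_sqrB_le_grad (I J : finType) (A : pred I) n
    (K : I -> J -> 'rV[R]_n -> R) (z1 z2 : I -> 'rV[R]_n) (c : R) :
  (forall i p z, differentiable (K i p) z) ->
  (forall s : R, \sum_(i | A i) \sum_(p : J)
      sqnorm (grad (K i p) (z2 i + s *: (z1 i - z2 i))) <= c ^+ 2) ->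
  \sum_(i | A i) \sum_(p : J) (K i p (z1 i) - K i p (z2 i)) ^+ 2
    <= c ^+ 2 * \sum_(i | A i) sqnorm (z1 i - z2 i).
Proof.
move=> dK Kc.
pose v i p := K i p (z1 i) - K i p (z2 i).
pose D i := z1 i - z2 i.
(* The increment of [phi] over [0, 1] is the left-hand side; bound its derivative
   at the mean value point by Cauchy-Schwarz. *)
pose phi s := \sum_(i | A i) \sum_(p : J) v i p * K i p (z2 i + s *: D i).
pose dphi s := \sum_(i | A i) \sum_(p : J) v i p * 'D_(D i) (K i p) (z2 i + s *: D i).
have phi_derive (s : R) : is_derive s 1 phi (dphi s).
  apply: is_derive_big => i _; apply: is_derive_big => p _.
  exact/is_deriveMl/is_derive_line.
have phi_cont : {within `[0, 1], continuous phi}%classic.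
  apply: derivable_within_continuous => s _.
  exact: (@ex_derive _ _ _ _ _ _ _ (phi_derive s)).
have [s _ mvt] := MVT ltr01 (fun s _ => phi_derive s) phi_cont.
have phi10 : phi 1 - phi 0 = \sum_(i | A i) \sum_(p : J) v i p ^+ 2.
  rewrite -sumrB; apply: eq_bigr => i _; rewrite -sumrB; apply: eq_bigr => p _.
  by rewrite scale1r scale0r addr0 /D subrKC -mulrBr expr2.
rewrite phi10 subr0 mulr1 in mvt.
set Vs := \sum_(i | A i) _ in mvt *; set E := \sum_(i | A i) sqnorm (D i).
have dphi_sqr : dphi s ^+ 2 <= Vs * (E * c ^+ 2).
  apply: (le_trans (sqr_sum2_mul_le _ _ _ _ _)); apply: ler_wpM2l.
    by do 2!(apply: sumr_ge0 => ? _); apply: sqr_ge0.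
  apply: (@le_trans _ _ (\sum_(i | A i) \sum_(p : J)
      E * sqnorm (grad (K i p) (z2 i + s *: D i)))).
    apply: ler_sum => i Ai; apply: ler_sum => p _.
    apply: (le_trans (sqr_derive_le _ _ _ (dK _ _ _))); apply: ler_wpM2r.
      exact: sqnorm_ge0.
    by rewrite /E (bigD1 i) //= lerDl sumr_ge0 // => ? _; apply: sqnorm_ge0.
  under eq_bigr do rewrite -mulr_sumr; rewrite -mulr_sumr; apply: ler_wpM2l; last exact: Kc.
  by apply: sumr_ge0 => ? _; apply: sqnorm_ge0.
rewrite -mvt in dphi_sqr.
have [Vs_gt0|Vs_le0] := ltrP 0 Vs.
  by rewrite mulrC -(ler_pM2l Vs_gt0) -expr2.
by rewrite (le_trans Vs_le0) // mulr_ge0 ?sqr_ge0 // sumr_ge0 // => ? _; apply: sqnorm_ge0.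
Qed.

End RowCalculus.

Section BlockRow.
Context {n : nat} {p_ : 'I_n -> nat}.
Local Notation Rank := tagnat.Rank.

Lemma mxrow_Rank {T : Type} m (B : forall j, 'M[T]_(m, p_ j)) a j (q : 'I_(p_ j)) :
  (\mxrow_(j0 < n) B j0) a (Rank j q) = B j a q.
Proof. by rewrite -[in RHS](mxrowK B j) [RHS]mxE. Qed.

Lemma rowP_Rank {T : Type} (A B : 'rV[T]_(\sum_j p_ j)) :
  (forall j (q : 'I_(p_ j)), A 0 (Rank j q) = B 0 (Rank j q)) -> A = B.
Proof.
by move=> AB; apply/matrixP => a r; rewrite (ord1 a) -(tagnat.sig2K r) AB.
Qed.

Lemma sum_Rank {V : nmodType} (F : 'I_(\sum_j p_ j) -> V) :
  \sum_r F r = \sum_j \sum_(q < p_ j) F (Rank j q).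
Proof.
rewrite (sig_big_dep xpredT (fun _ _ => true) (fun j q => F (Rank j q))) /=.
rewrite (reindex (@tagnat.rank _ p_)) /=; last exact: tagnat.rank_bij_on.
by apply: eq_bigr => -[j q] _; rewrite tagnat.rankE.
Qed.

Lemma delta_Rank {R : pzSemiRingType} j (q : 'I_(p_ j)) j' (q' : 'I_(p_ j')) :
  (delta_mx 0 (Rank j q) : 'rV[R]_(\sum_j p_ j)) 0 (Rank j' q') =
  ((j' == j) && (q' == q :> nat))%:R.
Proof. by rewrite mxE eqxx /= -tagnat.eq_Rank. Qed.

End BlockRow.

Section Model.
Context {R : realType} {M N : nat} {d P : 'I_M.+1 -> nat}
  {X : 'I_M.+1 -> Type} {Y : Type}
  (x : forall m : 'I_M.+1, 'I_N -> X m) (y : 'I_N -> Y)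
  (h : forall m : 'I_M.+1, 'rV[R]_(d m) -> X m -> 'rV[R]_(P m))
  (l : 'rV[R]_(\sum_(j < M.+1) P j) -> Y -> R)
  (C : forall m : 'I_M.+1, 'rV[R]_(P m) -> 'rV[R]_(P m)).

Local Notation Emb := (@Emb R M P N).
Local Notation Rank := tagnat.Rank.
Local Notation dfw := (@dfwith _ (fun j : 'I_M.+1 => 'I_N -> 'rV[R]_(P j))).
Local Notation pdfw := (@dfwith _ (fun j : 'I_M.+1 => 'rV[R]_(d j))).

Hypothesis l_diff : forall (yy : Y) z, differentiable (l^~ yy) z.
Hypothesis l_diff2 : forall (yy : Y) z k,
  differentiable (fun w => pderiv1 (l^~ yy) w k) z.
Hypothesis h_diff : forall m (xi : X m) th,
  differentiable (fun th' => h m th' xi) th.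

Definition embRow (Phi : Emb) (i : 'I_N) : 'rV[R]_(\sum_j P j) :=
  \mxrow_(j < M.+1) Phi j i.

Lemma embRow_Rank Phi i j (q : 'I_(P j)) : embRow Phi i 0 (Rank j q) = Phi j i 0 q.
Proof. exact: mxrow_Rank. Qed.

Lemma sqnorm_embRowB (Phi Psi : Emb) i :
  sqnorm (embRow Phi i - embRow Psi i) = \sum_j sqnorm (Phi j i - Psi j i).
Proof.
rewrite /sqnorm sum_Rank; apply: eq_bigr => j _; apply: eq_bigr => q _.
rewrite [in LHS]mxE [in RHS]mxE [(- embRow Psi i) _ _]mxE [(- Psi j i) _ _]mxE.
by rewrite !embRow_Rank.
Qed.

Lemma embRow_segment (Phi Psi : Emb) (s : R) i :
  embRow (fun j k => Psi j k + s *: (Phi j k - Psi j k)) i =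
  embRow Psi i + s *: (embRow Phi i - embRow Psi i).
Proof. by apply/matrixP => a r; rewrite !mxE. Qed.

Lemma embRow_pertE Phi j i (q : 'I_(P j)) t i' :
  embRow (pertE Phi j i q t) i' =
  embRow Phi i' + t *: (if i == i' then delta_mx 0 (Rank j q) else 0).
Proof.
have [<-|ne_i] := eqVneq i i'; apply: rowP_Rank => j' q'.
  rewrite [RHS]mxE [X in _ + X]mxE !embRow_Rank /pertE.
  case: (eqVneq j j') => [e|ne]; last first.
    by rewrite dfwithout // delta_Rank eq_sym (negbTE ne) mulr0 addr0.
  by subst j'; rewrite dfwithin eqxx delta_Rank !mxE !eqxx.
rewrite scaler0 addr0 !embRow_Rank /pertE.
case: (eqVneq j j') => [e|ne]; last by rewrite dfwithout.
by subst j'; rewrite dfwithin eq_sym (negbTE ne_i).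
Qed.

Lemma embRow_dfwith (Phi : Emb) m (V : 'I_N -> 'rV[R]_(P m)) i :
  embRow (dfw Phi m V) i =
  embRow (dfw Phi m (fun _ => 0)) i + \sum_(p < P m) V i 0 p *: delta_mx 0 (Rank m p).
Proof.
apply: rowP_Rank => j q; rewrite [LHS]embRow_Rank [RHS]mxE embRow_Rank summxE.
rewrite (eq_bigr (fun p => V i 0 p * ((j == m) && (q == p :> nat))%:R)); last first.
  by move=> p _; rewrite mxE delta_Rank.
case: (eqVneq m j) => [e|ne]; last first.
  by rewrite !dfwithout // big1 ?addr0 // => p _; rewrite mulr0.
subst j; rewrite !dfwithin mxE add0r (bigD1 q) //= !eqxx mulr1 big1 ?addr0 // => p pq.
by rewrite eq_sym (inj_eq val_inj) (negbTE pq) mulr0.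
Qed.

Definition dlossS (S : {set 'I_N}) m (i : 'I_N) (p : 'I_(P m))
    (z : 'rV[R]_(\sum_j P j)) : R :=
  (if i \in S then #|S|%:R^-1 else 0) * pderiv1 (l^~ (y i)) z (Rank m p).

Lemma differentiable_dlossS S m i p z : differentiable (dlossS S m i p) z.
Proof.
have -> : dlossS S m i p =
    (if i \in S then #|S|%:R^-1 else 0) *: (fun w => pderiv1 (l^~ (y i)) w (Rank m p)).
  by apply/funext => w.
exact: differentiableZ.
Qed.

Lemma pdE_lossS S m i (p : 'I_(P m)) (Phi : Emb) :
  pdE m i p (lossS y l S) Phi = dlossS S m i p (embRow Phi i).
Proof.
rewrite /pdE.
pose e i' : 'rV[R]_(\sum_j P j) := if i == i' then delta_mx 0 (Rank m p) else 0.
have -> : (fun t => lossS y l S (pertE Phi m i p t)) = (fun t =>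
    #|S|%:R^-1 * \sum_(i' in S) l (embRow Phi i' + t *: e i') (y i')).
  by apply/funext => t; congr (_ * _); apply: eq_bigr => i' _; rewrite -embRow_pertE.
have D := is_deriveMl #|S|%:R^-1 (is_derive_big (index_enum _) (fun i' => i' \in S)
  (fun i' _ => is_derive_line (l^~ (y i')) (embRow Phi i') (e i') 0 (l_diff _ _))).
rewrite derive1E (@derive_val _ _ _ _ _ _ _ D) /dlossS.
rewrite (eq_bigr (fun i' => if i == i' then pderiv1 (l^~ (y i)) (embRow Phi i) (Rank m p)
  else 0)) => [|i' _]; last first.
  by rewrite /e scale0r addr0; case: eqP => [<-|_]; rewrite ?pderiv1E ?derive0.
case: ifP => iS; last first.
  rewrite [X in _ * X]big1 ?mulr0 ?mul0r // => i' i'S.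
  by case: eqP => // ii'; rewrite ii' i'S in iS.
rewrite (bigD1 i) //= eqxx [X in _ + X]big1 ?addr0 // => i' /andP[_ ne].
by rewrite eq_sym (negbTE ne).
Qed.

Lemma pdE_embRow (f : 'rV[R]_(\sum_j P j) -> R) i j k (q : 'I_(P j)) (Phi : Emb) :
  pdE j k q (fun Psi => f (embRow Psi i)) Phi =
  if k == i then pderiv1 f (embRow Phi i) (Rank j q) else 0.
Proof.
rewrite /pdE; under eq_fun do rewrite embRow_pertE.
by rewrite derive1_line0; case: eqP => _; rewrite ?pderiv1E ?derive0.
Qed.

Lemma hess_sqE S m (Phi : Emb) : hess_sq y l S m Phi =
  \sum_(i in S) \sum_(p < P m) sqnorm (grad (dlossS S m i p) (embRow Phi i)).
Proof.
rewrite /hess_sq; apply: eq_bigr => i iS; apply: eq_bigr => p _.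
have -> : pdE m i p (lossS y l S) = fun Psi => dlossS S m i p (embRow Psi i).
  by apply/funext => Psi; rewrite pdE_lossS.
rewrite /sqnorm sum_Rank; apply: eq_bigr => j _.
rewrite (bigD1 i) //= [X in _ + X]big1 ?addr0 => [|k /andP[_ /negbTE ki]].
  by apply: eq_bigr => q _; rewrite pdE_embRow eqxx mxE.
by apply: big1 => q _; rewrite pdE_embRow ki expr0n.
Qed.

Definition jacE m (th : 'rV[R]_(d m)) i k (p : 'I_(P m)) : R :=
  derive1 (fun t : R => h m (th + t *: delta_mx 0 k) (x m i) 0 p) 0.

Lemma jac_sqE S m th :
  jac_sq x h S m th = \sum_k \sum_(i in S) \sum_(p < P m) jacE m th i k p ^+ 2.
Proof. by rewrite exchange_big; apply: eq_bigr => i _; rewrite exchange_big. Qed.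

Lemma gradS_entry S m (Phi : Emb) th k :
  gradS x y h l S m Phi th 0 k = \sum_(i in S) \sum_(p < P m)
    jacE m th i k p * dlossS S m i p (embRow (dfw Phi m (emb x h m th)) i).
Proof.
rewrite /gradS /grad mxE /pderiv1 /lossS.
pose A i := embRow (dfw Phi m (fun _ => 0)) i.
pose u i t := h m (th + t *: delta_mx 0 k) (x m i).
pose e p : 'rV[R]_(\sum_j P j) := delta_mx 0 (Rank m p).
have -> : (fun t => #|S|%:R^-1 * \sum_(i in S)
    l (\mxrow_j dfw Phi m (emb x h m (th + t *: delta_mx 0 k)) j i) (y i)) =
  fun t => #|S|%:R^-1 * \sum_(i in S) l (A i + \sum_p u i t 0 p *: e p) (y i).
  apply/funext => t; congr (_ * _); apply: eq_bigr => i _.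
  exact: (congr1 (l^~ (y i)) (embRow_dfwith _ _ _ i)).
have du i : differentiable (u i) 0.
  exact: differentiable_comp (differentiable_line _ _ _) (h_diff _ _ _).
have D := is_deriveMl #|S|%:R^-1 (is_derive_big (index_enum _) (fun i => i \in S)
  (fun i _ => is_derive_affine_comp (l^~ (y i)) (A i) e (u i) 0 (du i) (l_diff _ _))).
rewrite derive1E (@derive_val _ _ _ _ _ _ _ D) mulr_sumr; apply: eq_bigr => i iS.
rewrite mulr_sumr; apply: eq_bigr => p _.
by rewrite /dlossS iS pderiv1E embRow_dfwith /u scale0r addr0 mulrCA.
Qed.

Lemma sqnorm_gradSB_le S m (Phi1 Phi2 : Emb) th Hm Gm :
  (forall Phi, Num.sqrt (hess_sq y l S m Phi) <= Hm) ->
  Num.sqrt (jac_sq x h S m th) <= Gm ->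
  sqnorm (gradS x y h l S m Phi1 th - gradS x y h l S m Phi2 th) <=
  Hm ^+ 2 * Gm ^+ 2 * \sum_(i in S) sqnorm
    (embRow (dfw Phi1 m (emb x h m th)) i - embRow (dfw Phi2 m (emb x h m th)) i).
Proof.
move=> hessH jacG; set Psi1 := dfw Phi1 m _; set Psi2 := dfw Phi2 m _.
set E := \sum_(i in S) _.
pose v i p := dlossS S m i p (embRow Psi1 i) - dlossS S m i p (embRow Psi2 i).
have v_le : \sum_(i in S) \sum_(p < P m) v i p ^+ 2 <= Hm ^+ 2 * E.
  apply: sum_sqrB_le_grad => [i p z|s]; first exact: differentiable_dlossS.
  pose Psi j k := Psi2 j k + s *: (Psi1 j k - Psi2 j k).
  apply: le_trans (le_sqr_of_sqrtr_le _ (hessH Psi)); last first.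
    by rewrite hess_sqE; do 2!(apply: sumr_ge0 => ? _); apply: sqnorm_ge0.
  by rewrite hess_sqE; apply: ler_sum => i _; apply: ler_sum => p _; rewrite embRow_segment.
have entry k : (gradS x y h l S m Phi1 th - gradS x y h l S m Phi2 th) 0 k =
    \sum_(i in S) \sum_(p < P m) jacE m th i k p * v i p.
  rewrite [LHS]mxE [X in _ + X]mxE !gradS_entry -sumrB; apply: eq_bigr => i _.
  by rewrite -sumrB; apply: eq_bigr => p _; rewrite -mulrBr.
have jac_le : jac_sq x h S m th <= Gm ^+ 2.
  by apply: le_sqr_of_sqrtr_le => //; do 3!(apply: sumr_ge0 => ? _); apply: sqr_ge0.
apply: (@le_trans _ _ (jac_sq x h S m th * \sum_(i in S) \sum_(p < P m) v i p ^+ 2)).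
  rewrite jac_sqE mulr_suml /sqnorm; apply: ler_sum => k _.
  by rewrite entry; apply: sqr_sum2_mul_le.
apply: (@le_trans _ _ (Gm ^+ 2 * (Hm ^+ 2 * E))); last by rewrite mulrA [Gm ^+ 2 * _]mulrC.
apply: ler_pM => //; last by do 2!(apply: sumr_ge0 => ? _); apply: sqr_ge0.
by rewrite jac_sqE; do 3!(apply: sumr_ge0 => ? _); apply: sqr_ge0.
Qed.

Lemma err_sqE (S : {set 'I_N}) T0 m th : \sum_(i in S) sqnorm
    (embRow (dfw (compEmb x h C T0) m (emb x h m th)) i -
     embRow (dfw (trueEmb x h T0) m (emb x h m th)) i) = err_sq x h C S T0 m.
Proof.
rewrite (eq_bigr _ (fun i _ => sqnorm_embRowB _ _ i)) exchange_big /=.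
rewrite (bigD1 m) //= big1 ?add0r => [|i _]; last by rewrite !dfwithin subrr sqnorm0.
apply: eq_bigr => j jm; apply: eq_bigr => i _.
by rewrite !dfwithout 1?eq_sym.
Qed.

Lemma gradSTheta_dfwith S (T0 : @Params R M d) m th :
  gradSTheta x y h l S m (pdfw T0 m th) = gradS x y h l S m (trueEmb x h T0) th.
Proof.
have E V : dfw (trueEmb x h (pdfw T0 m th)) m V = dfw (trueEmb x h T0) m V.
  apply: functional_extensionality_dep => j.
  case: (eqVneq m j) => [<-|ne]; first by rewrite !dfwithin.
  by rewrite !dfwithout // /trueEmb dfwithout.
by rewrite /gradSTheta dfwithin /gradS; under eq_fun do rewrite E.
Qed.

Lemma psqnorm_dfwithB (T0 : @Params R M d) m th :
  psqnorm (psub (pdfw T0 m th) T0) = sqnorm (th - T0 m).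
Proof.
rewrite /psqnorm /psub (bigD1 m) //= dfwithin big1 ?addr0 // => j jm.
by rewrite dfwithout 1?eq_sym // subrr sqnorm0.
Qed.

Lemma traj_sum (S : {set 'I_N}) eta T0 k m :
  traj x y h l C S eta T0 k m = T0 m - eta *: \sum_(s < k) Ghat x y h l C S eta T0 s m.
Proof.
elim: k => [|k IH]; first by rewrite big_ord0 scaler0 subr0.
by rewrite big_ord_recr /= {1}IH /Ghat scalerDr opprD addrA.
Qed.

Lemma enorm_gradS_drift_le (S : {set 'I_N}) T0 m th L :
  (forall T1 T2 : @Params R M d,
     enorm (gradSTheta x y h l S m T1 - gradSTheta x y h l S m T2)
       <= L * Num.sqrt (psqnorm (psub T1 T2))) ->
  enorm (gradS x y h l S m (trueEmb x h T0) th - gradSTheta x y h l S m T0)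
    <= L * enorm (th - T0 m).
Proof.
by move=> lip; have := lip (pdfw T0 m th) T0; rewrite gradSTheta_dfwith psqnorm_dfwithB.
Qed.

Lemma sqnorm_gradS_compB_le (S : {set 'I_N}) T0 m th Hm Gm :
  (forall Phi, Num.sqrt (hess_sq y l S m Phi) <= Hm) ->
  Num.sqrt (jac_sq x h S m th) <= Gm ->
  sqnorm (gradS x y h l S m (compEmb x h C T0) th - gradS x y h l S m (trueEmb x h T0) th)
    <= Hm ^+ 2 * Gm ^+ 2 * err_sq x h C S T0 m.
Proof. by move=> hessH jacG; rewrite -(err_sqE _ _ _ th); apply: sqnorm_gradSB_le. Qed.

Lemma sqnorm_Ghat_G0_le (S : {set 'I_N}) m (Q : nat) eta T0 (L c : R) :
  0 <= L -> 0 <= eta -> 0 <= c -> L * eta * Q%:R * 4 <= 1 ->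
  (forall th, enorm (gradS x y h l S m (trueEmb x h T0) th - gradSTheta x y h l S m T0)
     <= L * enorm (th - T0 m)) ->
  (forall th, sqnorm (gradS x y h l S m (compEmb x h C T0) th -
                      gradS x y h l S m (trueEmb x h T0) th) <= c) ->
  forall k, (k < Q)%N ->
  sqnorm (Ghat x y h l C S eta T0 k m - G0 x y h l S T0 m) <=
  16 * Q%:R ^+ 2 * eta ^+ 2 * L ^+ 2 * sqnorm (G0 x y h l S T0 m) + 64 * Q%:R ^+ 2 * c.
Proof.
move=> L0 eta0 c0 step lipL comp.
pose a s := enorm (Ghat x y h l C S eta T0 s m - G0 x y h l S T0 m).
set g := enorm (G0 x y h l S T0 m).
have rec k : (k < Q)%N -> a k <= Num.sqrt c + L * eta * \sum_(s < k) (a s + g).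
  move=> _; rewrite /a; set th := traj x y h l C S eta T0 k m.
  have -> : Ghat x y h l C S eta T0 k m - G0 x y h l S T0 m =
      (gradS x y h l S m (compEmb x h C T0) th - gradS x y h l S m (trueEmb x h T0) th)
      + (gradS x y h l S m (trueEmb x h T0) th - gradSTheta x y h l S m T0).
    by rewrite /Ghat /G0 addrA subrK.
  apply: (le_trans (enormD _ _)); apply: lerD; first exact: ler_wsqrtr.
  apply: (le_trans (lipL th)); rewrite -mulrA; apply: ler_wpM2l => //.
  rewrite /th traj_sum addrC addKr enormN enormZ ger0_norm //; apply: ler_wpM2l => //.
  apply: (le_trans (enorm_sum _ (fun s => Ghat x y h l C S eta T0 s m))).
  apply: ler_sum => s _.
  by rewrite -{1}(subrK (G0 x y h l S T0 m) (Ghat x y h l C S eta T0 s m)) enormD.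
move=> k kQ; have Q1 : 1 <= Q%:R :> R by rewrite ler1n (leq_trans _ kQ).
have := discrete_gronwall _ _ _ _ _ (mulr_ge0 L0 eta0) step (sqrtr_ge0 c) (enorm_ge0 _)
  rec k kQ.
rewrite -ler_sqr ?nnegrE ?enorm_ge0 //; last first.
  by apply: mulr_ge0; [lra | rewrite addr_ge0 ?sqrtr_ge0 // !mulr_ge0 ?enorm_ge0].
rewrite -enorm_sqr -/(a k) -(enorm_sqr (G0 x y h l S T0 m)) -/g -{2}(sqr_sqrtr c0).
move: (a k) (Num.sqrt c) (sqrtr_ge0 c) => ak e e0 ak_le.
have := sqr_ge0 (L * eta * Q%:R * g - e).
have : 0 <= (Q%:R ^+ 2 - 1) * e ^+ 2 by rewrite mulr_ge0 ?sqr_ge0 // subr_ge0; nra.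
nra.
Qed.

End Model.

Theorem lemma2 (R : realType) (M N B Q : nat) (d P : 'I_M.+1 -> nat)
  (X : 'I_M.+1 -> Type) (Y : Type)
  (x : forall m : 'I_M.+1, 'I_N -> X m) (y : 'I_N -> Y)
  (h : forall m : 'I_M.+1, 'rV[R]_(d m) -> X m -> 'rV[R]_(P m))
  (l : 'rV[R]_(\sum_(j < M.+1) P j) -> Y -> R)
  (C : forall m : 'I_M.+1, 'rV[R]_(P m) -> 'rV[R]_(P m))
  (pB : {set 'I_N} -> R)
  (L : R) (Lm sigma H G : 'I_M.+1 -> R) (eta : R) (T0 : @Params R M d)
  (* the server: h_0(theta_0; x) = theta_0 *)
  (hd0 : d ord0 = P ord0)
  (hh0 : forall (th : 'rV[R]_(d ord0)) (xi : X ord0),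
           h ord0 th xi = castmx (erefl 1%N, hd0) th)
  (* the mini-batch distribution: a probability on batches of B samples *)
  (pB_ge0 : forall S, 0 <= pB S)
  (pB_sum1 : \sum_(S : {set 'I_N}) pB S = 1)
  (pB_size : forall S, pB S != 0 -> #|S| = B)
  (* smoothness implicit in the paper (gradients / Hessians exist) *)
  (l_diff : forall (yy : Y) z, differentiable (l^~ yy) z)
  (l_diff2 : forall (yy : Y) z k,
      differentiable (fun w => pderiv1 (l^~ yy) w k) z)
  (h_diff : forall m (xi : X m) th, differentiable (fun th' => h m th' xi) th)
  (* (A1) *)
  (L_ge0 : 0 <= L) (Lm_ge0 : forall m, 0 <= Lm m)
  (A1 : forall T1 T2 : @Params R M d,
      Num.sqrt (psqnorm (fun m => gradF x y h l m T1 - gradF x y h l m T2))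
        <= L * Num.sqrt (psqnorm (psub T1 T2)))
  (A1m : forall (S : {set 'I_N}) m (T1 T2 : @Params R M d), #|S| = B ->
      enorm (gradSTheta x y h l S m T1 - gradSTheta x y h l S m T2)
        <= Lm m * Num.sqrt (psqnorm (psub T1 T2)))
  (* (A2) *)
  (A2 : forall m (T : @Params R M d),
      \sum_(S : {set 'I_N}) pB S *: gradSTheta x y h l S m T = gradF x y h l m T)
  (* (A3) *)
  (sigma_ge0 : forall m, 0 <= sigma m)
  (A3 : forall m (T : @Params R M d),
      \sum_(S : {set 'I_N}) pB S * sqnorm (gradF x y h l m T - gradSTheta x y h l S m T)
        <= sigma m ^+ 2 / B%:R)
  (* (A4) *)
  (H_ge0 : forall m, 0 <= H m)
  (A4 : forall (S : {set 'I_N}) m (Phi : @Emb R M P N), #|S| = B ->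
      Num.sqrt (hess_sq y l S m Phi) <= H m)
  (* (A5) *)
  (G_ge0 : forall m, 0 <= G m)
  (A5 : forall (S : {set 'I_N}) m (th : 'rV[R]_(d m)), #|S| = B ->
      Num.sqrt (jac_sq x h S m th) <= G m)
  (* step size *)
  (Q_gt0 : (0 < Q)%N) (eta_gt0 : 0 < eta)
  (eta_le : eta * (4 * Q%:R * \big[Num.max/0]_(m < M.+1) Lm m) <= 1) :
  \sum_(k < Q) \sum_(S : {set 'I_N})
     pB S * psqnorm (psub (Ghat x y h l C S eta T0 k) (G0 x y h l S T0))
  <= 16 * Q%:R ^+ 3 * eta ^+ 2 *
       \sum_(m < M.+1) Lm m ^+ 2 * sqnorm (gradF x y h l m T0)
   + 16 * Q%:R ^+ 3 * eta ^+ 2 *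
       \sum_(m < M.+1) Lm m ^+ 2 * (sigma m ^+ 2 / B%:R)
   + 64 * Q%:R ^+ 3 *
       \sum_(m < M.+1) H m ^+ 2 * G m ^+ 2 *
          (\sum_(S : {set 'I_N}) pB S * err_sq x h C S T0 m).
Proof.
have eta0 : 0 <= eta := ltW eta_gt0.
have step m : Lm m * eta * Q%:R * 4 <= 1.
  have Lm_le : Lm m <= \big[Num.max/0]_(j < M.+1) Lm j by exact: le_bigmax.
  apply: le_trans eta_le; move: Lm_le; set Lmax := \big[Num.max/0]_(_ < _) _ => Lm_le.
  have := mulr_ge0 eta0 (ler0n R Q); nra.
pose a m := 16 * Q%:R ^+ 2 * eta ^+ 2 * Lm m ^+ 2.
pose b m := 64 * Q%:R ^+ 2 * (H m ^+ 2 * G m ^+ 2).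
have batch k S m : (k < Q)%N -> pB S != 0 ->
    sqnorm (Ghat x y h l C S eta T0 k m - G0 x y h l S T0 m) <=
    a m * sqnorm (G0 x y h l S T0 m) + b m * err_sq x h C S T0 m.
  move=> kQ /pB_size SB; rewrite /b -mulrA.
  apply: sqnorm_Ghat_G0_le => // [|th|th].
  - by rewrite !mulr_ge0 ?sqr_ge0 //; do 2!(apply: sumr_ge0 => ? _); apply: sqnorm_ge0.
  - by apply: enorm_gradS_drift_le => T1 T2; apply: A1m.
  - by apply: sqnorm_gradS_compB_le => // [Phi|]; [exact: A4 | exact: A5].
have moment m : \sum_S pB S * sqnorm (G0 x y h l S T0 m) <=
    sqnorm (gradF x y h l m T0) + sigma m ^+ 2 / B%:R.
  by rewrite (sqnorm_mean_variance _ _ _ _ _ pB_sum1 (A2 m T0)) lerD2l.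
apply: le_trans (sum_weighted_le _ _ _ _ _ _ pB_ge0 batch) _.
apply: (@le_trans _ _ (Q%:R * \sum_m
    (a m * (sqnorm (gradF x y h l m T0) + sigma m ^+ 2 / B%:R)
     + b m * \sum_S pB S * err_sq x h C S T0 m))).
  rewrite ler_wpM2l //; apply: ler_sum => m _.
  under eq_bigr do rewrite mulrDr mulrCA [pB _ * (b m * _)]mulrCA.
  rewrite big_split /= -!mulr_sumr lerD2r ler_wpM2l ?moment //.
  by rewrite !mulr_ge0 ?sqr_ge0.
rewrite !mulr_sumr -!big_split /=; apply: ler_sum => m _; rewrite /a /b; lra.
Qed.
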